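(* Let $n\ge 2$ be an integer, $k=3$ and $\alpha=(\tfrac12,\tfrac12,\tfrac1n)$. Let $f(g)$ be the number of $\alpha$-communal triples with entries summing to $g$. Then \[ f(g)=\tfrac12\left(\lfloor g/n\rfloor+1\right)\left(\lfloor g/n\rfloor+\epsilon_g\right),\quad \epsilon_g=\begin{cases}2 & g \text{ even},\\ 0 & g\text{ odd},\end{cases} \] and the generating function $F(x)=\sum_{g\ge0}f(g)x^g$ is \[ F(x)=\frac{1+2x^{n+1}+x^{2n}}{(1-x^2)(1-x^n)(1-x^{2n})}\ \text{ if } n \text{ is odd},\qquad F(x)=\frac{1+x^{n+1}}{(1-x^2)(1-x^n)^2}\ \text{ if } n\text{ is even}. \]
   Context: A triple $[g_1,g_2,g_3]$ of integers is $\alpha$-communal if $0\le g_i\le\alpha_i(g_1+g_2+g_3)$ for $i=1,2,3$. *)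

From HB Require Import structures.
From mathcomp Require Import all_boot all_order all_algebra.
Set Implicit Arguments. Unset Strict Implicit. Unset Printing Implicit Defensive.
Import Order.TTheory GRing.Theory Num.Theory.
Local Open Scope ring_scope.

Definition communal (alpha : rat * rat * rat) (g1 g2 g3 : int) : bool :=
  let s := (g1 + g2 + g3)%:~R : rat in
  [&& 0 <= g1, 0 <= g2, 0 <= g3,
      g1%:~R <= alpha.1.1 * s, g2%:~R <= alpha.1.2 * s & g3%:~R <= alpha.2 * s].

(* Number of alpha-communal integer triples with entries summing to g.
   Any such triple has 0 <= g_i <= g, so we may range over 'I_(g+1)^3. *)
Definition ncommunal (alpha : rat * rat * rat) (g : nat) : nat :=
  #|[set t : 'I_g.+1 * 'I_g.+1 * 'I_g.+1 |
      ((t.1.1 + t.1.2 + t.2)%N == g) &&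
      communal alpha (t.1.1 : nat)%:Z (t.1.2 : nat)%:Z (t.2 : nat)%:Z]|.

Definition gf_trunc (f : nat -> nat) (N : nat) : {poly int} :=
  \sum_(g < N) (f g)%:Z *: 'X^g.

(* Formal power series identity  sum_g f(g) x^g = P / Q  (Q(0) = 1),
   stated as: (sum_g f(g) x^g) * Q = P as formal power series, i.e. all
   coefficients agree, checked on every truncation. *)
Definition gf_is (f : nat -> nat) (P Q : {poly int}) : Prop :=
  forall N i : nat, (i < N)%N -> (gf_trunc f N * Q)`_i = P`_i.

From HB Require Import structures.
From mathcomp Require Import all_boot all_order all_algebra.
From mathcomp Require Import zify ring.
Import Order.TTheory GRing.Theory Num.Theory.
Local Open Scope ring_scope.

(* With g = a + b + c, the triple (a, b, c) is communal iff
   2a <= g, 2b <= g and nc <= g.  For a fixed last entry c with nc <= g,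
   b = g - a - c is forced and a ranges over an interval of length
   c + 1 - [g odd]; summing over c <= q := g %/ n gives the closed form
   2 f(g) = (q + 1) (q + [g even] * 2).

   Multiplying a series by 1 - x^e acts on its
   coefficient sequence by the backward difference u |-> u(i) - u(i - e)
   (with u = 0 at negative indices), so it suffices to show that three
   successive differences of f are the coefficients of the numerator.
   This is a direct computation from the closed form: the first
   n-difference only depends on i %/ n and the parity of i, and the
   remaining differences become piecewise constant. *)

Lemma communalE (n : nat) (n_gt0 : (0 < n)%N) (a b c : nat) :
  communal (1 / 2, 1 / 2, 1 / n%:R) a%:Z b%:Z c%:Z =
  [&& (a * 2 <= a + b + c)%N, (b * 2 <= a + b + c)%N & (c * n <= a + b + c)%N].
Proof.
rewrite /communal /= -!PoszD !pmulrn !mul1r ![_^-1 * _]mulrC.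
by rewrite !ler_pdivlMr ?ltr0n // -!natrM !ler_nat.
Qed.

Lemma card_triplesE (P : nat -> nat -> nat -> bool) (g : nat) :
  #|[set t : 'I_g.+1 * 'I_g.+1 * 'I_g.+1 | P t.1.1 t.1.2 t.2]| =
  (\sum_(a < g.+1) \sum_(b < g.+1) \sum_(c < g.+1) P a b c)%N.
Proof.
rewrite pair_bigA pair_bigA /= -sum1_card big_mkcond /=.
by apply: eq_bigr => t _; rewrite inE; case: (P _ _ _).
Qed.

Lemma sum_pick (m k : nat) (R : bool) : (k < m)%N ->
  (\sum_(b < m) (((b : nat) == k) && R) = R)%N.
Proof.
move=> lt_km; rewrite (bigD1 (Ordinal lt_km)) //= eqxx big1 ?addn0 // => i ne_ik.
rewrite (_ : (i : nat) == k = false) //; apply/negbTE.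
by apply: contra ne_ik => /eqP eq_ik; apply/eqP/val_inj.
Qed.

Lemma sum_interval (m lo hi : nat) :
  (\sum_(i < m) (lo <= i < hi) = minn m hi - lo)%N.
Proof.
elim: m => [|m IHm]; first by rewrite big_ord0; lia.
by rewrite big_ord_recr /= IHm; case: (boolP (lo <= m < hi)%N) => /=; lia.
Qed.

Lemma sum_shifted_double (m : nat) (o : bool) :
  ((\sum_(c < m) (c + 1 - o)) * 2 = m * (m + 1 - o * 2))%N.
Proof.
elim: m => [|m IHm]; first by rewrite big_ord0.
by rewrite big_ord_recr /= mulnDl IHm; case: o {IHm}; nia.
Qed.

Section Counting.
Variables n g : nat.
Hypothesis n_ge2 : (2 <= n)%N.

(* Triples of total g with last entry c: none if nc > g, otherwise the middle
   entry is forced and the first ranges over c + 1 - [g odd] values. *)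
Lemma count_given_last (c : nat) : (c <= g)%N ->
  (\sum_(a < g.+1) \sum_(b < g.+1)
     [&& a + b + c == g, a * 2 <= a + b + c, b * 2 <= a + b + c
       & c * n <= a + b + c]%N =
   if (c * n <= g)%N then c + 1 - odd g else 0)%N.
Proof.
move=> le_cg.
have c2_le_cn : (c * 2 <= c * n)%N by rewrite leq_mul2l n_ge2 orbT.
have b_forced a b : [&& a + b + c == g, a * 2 <= a + b + c, b * 2 <= a + b + c
      & c * n <= a + b + c]%N =
    ((b == g - (a + c)) &&
     [&& a + c <= g, a * 2 <= g, (g - (a + c)) * 2 <= g & c * n <= g])%N by lia.
under eq_bigr => a _ do under eq_bigr => b _ do rewrite b_forced.
under eq_bigr => a _ do rewrite sum_pick ?ltnS ?leq_subr //.
have a_range a : [&& a + c <= g, a * 2 <= g, (g - (a + c)) * 2 <= g & c * n <= g]%N =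
    ((c * n <= g) && (g - c - g %/ 2 <= a < g %/ 2 + 1))%N by lia.
under eq_bigr => a _ do rewrite a_range.
case: (boolP (c * n <= g)%N) => /= [le_cn_g|_]; last by rewrite big1.
by rewrite sum_interval; case: (boolP (odd g)) => odd_g; lia.
Qed.

(* The closed form of f(g), doubled to stay in nat. *)
Lemma ncommunal_double :
  (ncommunal (1 / 2, 1 / 2, 1 / n%:R) g * 2 =
   (g %/ n).+1 * (g %/ n + (if odd g then 0 else 2)))%N.
Proof.
have n_gt0 : (0 < n)%N by lia.
rewrite /ncommunal (card_triplesE (fun a b c => ((a + b + c)%N == g) &&
  communal (1 / 2, 1 / 2, 1 / n%:R) a%:Z b%:Z c%:Z)).
under eq_bigr => a _ do under eq_bigr => b _ do under eq_bigr => c _ do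
  rewrite communalE //.
under eq_bigr => a _ do rewrite exchange_big.
rewrite exchange_big /=.
rewrite (eq_bigr _ (fun (c : 'I_g.+1) _ => count_given_last c (ltn_ord c))).
rewrite -big_mkcond /=.
under eq_bigl => c do rewrite -leq_divRL // -ltnS.
rewrite -(big_ord_widen _ (fun c => c + 1 - odd g)%N) ?ltnS ?leq_div //.
by rewrite sum_shifted_double; case: (odd g); nia.
Qed.
End Counting.

Lemma ncommunalE (n g : nat) : (2 <= n)%N ->
  (ncommunal (1 / 2, 1 / 2, 1 / n%:R) g)%:R =
  (1 / 2 : rat) * ((g %/ n)%N%:R + 1) * ((g %/ n)%N%:R + (if odd g then 0 else 2)).
Proof.
move=> n_ge2; have /(congr1 (fun m : nat => m%:R : rat)) := ncommunal_double n g n_ge2.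
rewrite !natrM natrD -addn1 natrD => double_eq.
rewrite -[LHS](@mulfK _ 2) ?pnatr_eq0 // double_eq.
by case: (odd g) => /=; field.
Qed.

Lemma coef_gf_trunc (f : nat -> nat) (N k : nat) :
  (gf_trunc f N)`_k = if (k < N)%N then (f k)%:Z else 0.
Proof.
rewrite /gf_trunc coef_sumMXn; under eq_bigl => j do rewrite andTb.
exact: (big_ord1_eq _ (fun j => (f j)%:Z)).
Qed.

Definition bdiff {R : zmodType} (e : nat) (u : nat -> R) (i : nat) : R :=
  u i - (if (e <= i)%N then u (i - e)%N else 0).

Lemma coef_mul_1subXn (R : comNzRingType) (p : {poly R}) (u : nat -> R) (N e : nat) :
  (forall i, (i < N)%N -> p`_i = u i) ->
  forall i, (i < N)%N -> (p * (1 - 'X^e))`_i = bdiff e u i.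
Proof.
move=> coef_p i lt_iN; rewrite mulrBr mulr1 coefB coefMXn /bdiff coef_p //.
by case: ltnP => // le_ei; rewrite coef_p // (leq_ltn_trans (leq_subr _ _) lt_iN).
Qed.

Lemma gf_is_bdiff3 (f : nat -> nat) (P : {poly int}) (e1 e2 e3 : nat) :
  (forall i, bdiff e1 (bdiff e2 (bdiff e3 (fun j => (f j)%:Z))) i = P`_i) ->
  gf_is f P ((1 - 'X^e1) * (1 - 'X^e2) * (1 - 'X^e3)).
Proof.
move=> diffP N i lt_iN; rewrite -diffP.
have -> : gf_trunc f N * ((1 - 'X^e1) * (1 - 'X^e2) * (1 - 'X^e3)) =
          gf_trunc f N * (1 - 'X^e3) * (1 - 'X^e2) * (1 - 'X^e1) by ring.
have coef_trunc j : (j < N)%N -> (gf_trunc f N)`_j = (f j)%:Z.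
  by move=> lt_jN; rewrite coef_gf_trunc lt_jN.
by do 3 apply: (@coef_mul_1subXn _ _ _ N) => //.
Qed.

Lemma divn_sub_succ {n i : nat} : (0 < n)%N -> (n <= i)%N ->
  (i %/ n = ((i - n) %/ n).+1)%N.
Proof.
by move=> n_gt0 le_ni; rewrite -{1}(subnKC le_ni) -{1}(mul1n n) divnMDl.
Qed.

(* Iterated differences of any sequence u given by the closed form of f;
   the parity of n decides whether i - n has the parity of i. *)
Section Differences.
Context {n : nat} (n_gt0 : (0 < n)%N) {u : nat -> int}.
Hypothesis u_double : forall j : nat,
  u j * 2 = ((j %/ n)%N%:Z + 1) * ((j %/ n)%N%:Z + (if odd j then 0 else 2)).

Lemma bdiff_even (i : nat) : ~~ odd n ->
  bdiff n u i = (i %/ n)%N%:Z + (if odd i then 0 else 1).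
Proof.
move=> even_n; rewrite /bdiff; have := u_double i.
case: leqP => [le_ni | lt_in]; last by rewrite divn_small //; case: (odd i); lia.
have := u_double (i - n); rewrite oddB // (negbTE even_n) addbF (divn_sub_succ n_gt0 le_ni).
by move: ((i - n) %/ n)%N => q; clear u_double le_ni; case: (odd i) => /=; nia.
Qed.

Lemma bdiff_odd (i : nat) : odd n ->
  bdiff n u i = if odd i then 0 else 2 * (i %/ n)%N%:Z + 1.
Proof.
move=> odd_n; rewrite /bdiff; have := u_double i.
case: leqP => [le_ni | lt_in]; last by rewrite divn_small //; case: (odd i); lia.
have := u_double (i - n); rewrite oddB // odd_n addbT (divn_sub_succ n_gt0 le_ni).
by move: ((i - n) %/ n)%N => q; clear u_double le_ni; case: (odd i) => /=; nia.
Qed.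

Lemma bdiff_even2 (i : nat) : ~~ odd n ->
  bdiff n (bdiff n u) i = if (i < n)%N && odd i then 0 else 1.
Proof.
move=> even_n; rewrite {1}/bdiff !bdiff_even //.
case: leqP => [le_ni | lt_in]; last by rewrite divn_small //; case: (odd i).
rewrite oddB // (negbTE even_n) addbF (divn_sub_succ n_gt0 le_ni).
by case: (odd i) => /=; lia.
Qed.

Lemma bdiff_odd2 (i : nat) : odd n ->
  bdiff n.*2 (bdiff n u) i =
  if odd i then 0 else if (i < n)%N then 1 else if (i < n.*2)%N then 3 else 4.
Proof.
move=> odd_n; rewrite {1}/bdiff !bdiff_odd //.
case: (leqP n.*2 i) => [le_2n_i | lt_i_2n].
  have le_n_i : (n <= i)%N by lia.
  rewrite oddB // odd_double addbF -mul2n divnBMl.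
  have q_ge2 : (2 <= i %/ n)%N by rewrite leq_divRL // mul2n.
  by rewrite ltnNge le_n_i /=; case: (odd i) => //; lia.
case: (odd i) => //; case: leqP => [le_n_i | lt_in]; last by rewrite divn_small.
by rewrite (divn_sub_succ n_gt0 le_n_i) divn_small //; lia.
Qed.

Lemma bdiff_even3 (i : nat) : ~~ odd n ->
  bdiff 2 (bdiff n (bdiff n u)) i = (1 + 'X^(n.+1) : {poly int})`_i.
Proof.
move=> even_n; rewrite coefD coef1 coefXn {1}/bdiff !bdiff_even2 //.
case: (leqP 2 i) => [le_2i | lt_i2]; last by case: i lt_i2 => [|[|]] //=; case: ifP; lia.
rewrite oddB // addbF; case: (boolP (odd i)) => odd_i /=.
all: by repeat case: ifP; repeat case: eqP; lia.
Qed.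

Lemma bdiff_odd3 (i : nat) : odd n ->
  bdiff 2 (bdiff n.*2 (bdiff n u)) i =
  (1 + 2%:R *: 'X^(n.+1) + 'X^(n.*2) : {poly int})`_i.
Proof.
move=> odd_n; rewrite !coefD coef1 coefZ !coefXn {1}/bdiff !bdiff_odd2 //.
case: (leqP 2 i) => [le_2i | lt_i2]; last first.
  by case: i lt_i2 => [|[|]] //=; repeat case: ifP; lia.
rewrite oddB // addbF; case: (boolP (odd i)) => odd_i /=.
all: by repeat case: ifP; repeat case: eqP; lia.
Qed.

End Differences.

Theorem mainTheorem11 (n : nat) (hn : (2 <= n)%N) :
  let alpha : rat * rat * rat := (1 / 2, 1 / 2, 1 / n%:R) in
  let f := ncommunal alpha in
  (forall g : nat,
     (f g)%:R = (1 / 2 : rat) * ((g %/ n)%N%:R + 1)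
                  * ((g %/ n)%N%:R + (if odd g then 0 else 2))) /\
  (odd n ->
     gf_is f (1 + 2%:R *: 'X^(n.+1) + 'X^(n.*2))
             ((1 - 'X^2) * (1 - 'X^n) * (1 - 'X^(n.*2)))) /\
  (~~ odd n ->
     gf_is f (1 + 'X^(n.+1))
             ((1 - 'X^2) * (1 - 'X^n) ^+ 2)).
Proof.
move=> alpha f; rewrite {}/f {}/alpha; have n_gt0 : (0 < n)%N by lia.
have f_double (j : nat) : (ncommunal (1 / 2, 1 / 2, 1 / n%:R) j)%:Z * 2 =
    ((j %/ n)%N%:Z + 1) * ((j %/ n)%N%:Z + (if odd j then 0 else 2)).
  by have := ncommunal_double n j hn; case: (odd j) => /=; lia.
split; first by move=> g; exact: ncommunalE.
split=> [odd_n | even_n].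
  by rewrite mulrAC; exact: gf_is_bdiff3 (bdiff_odd3 n_gt0 f_double ^~ odd_n).
by rewrite expr2 mulrA; exact: gf_is_bdiff3 (bdiff_even3 n_gt0 f_double ^~ even_n).
Qed.
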